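(* Let $G$ be a finite simple chordless Class 1 graph with maximum degree $\Delta$, let $\gamma$ be a proper $\Delta$-coloring and $\beta$ a proper $(\Delta+1)$-coloring of $G$, and let $\mathcal C$ be the set of proper $(\Delta+1)$-colorings of $G$ that are $K$-equivalent to $\beta$. Let $\alpha\in\mathcal C$ be minimal (as defined below), with missing colors $m_\alpha$ chosen so that $m_\alpha(x)=1$ if and only if $1$ is the only color missing at $x$. If $uv$ is an ugly edge in $\alpha$ and $X_u(\alpha,v)=(ux_0,ux_1,\dots,ux_p)$ with $x_0=v$ and $p\ge 1$, then $vx_p\notin E(G)$.
   Context: A (proper) $t$-coloring of $G$ is a map $\alpha:E(G)\to\{1,\dots,t\}$ with adjacent edges receiving different colors; $M(\alpha,j)$ is the set of edges of color $j$. $K_\alpha(c,d)$ is the subgraph formed by edges colored $c$ or $d$; a $K$-change swaps the two colors on one connected component of some $K_\alpha(c,d)$; two $t$-colorings are $K$-equivalent if one is obtained from the other by a finite sequence of $K$-changes using colors from $\{1,\dots,t\}$. Class 1 means $\chi'(G)=\Delta(G)$. A graph is chordless if no cycle $C$ has a chord (an edge joining two non-consecutive vertices of $C$). In a coloring in $\mathcal C$, an edge is bad if it lies in $M(\gamma,1)$ but is not colored $1$, and ugly if it is not in $M(\gamma,1)$ but is colored $1$. A coloring $\alpha\in\mathcal C$ is minimal if, among the colorings in $\mathcal C$ with the minimum number of bad edges, it has the minimum number of ugly edges. A color $c$ is missing at $x$ if no edge at $x$ has color $c$; $m_\alpha(x)$ is a fixed chosen missing color at $x$. An $\alpha$-fan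 at $u$ is a sequence of distinct edges $(ux_0,\dots,ux_p)$ at $u$ with $m_\alpha(x_i)=\alpha(ux_{i+1})$ for $0\le i<p$, and such that either $m_\alpha(x_p)$ is missing at $u$ or $m_\alpha(x_p)\in\{\alpha(ux_0),\dots,\alpha(ux_{p-1})\}$; $X_u(\alpha,v)$ denotes the unique such fan with $x_0=v$. *)

(* A finite simple graph is a symmetric irreflexive relation
   e : rel T on a finType T.  An edge coloring is a function a : T -> T -> nat,
   of which only the values a x y on edges (e x y) matter; properness requires
   a x y = a y x on edges, so it is really a map on unordered edges. *)
From mathcomp Require Import all_boot.
Set Implicit Arguments. Unset Strict Implicit. Unset Printing Implicit Defensive.

Section Defs.
Variable T : finType.
Variable e : rel T.

Definition deg (x : T) : nat := #|[set y | e x y]|.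
Definition maxdeg : nat := \max_(x : T) deg x.

Definition proper_col (t : nat) (a : T -> T -> nat) : Prop :=
  [/\ (forall x y, e x y -> 1 <= a x y <= t),
      (forall x y, e x y -> a x y = a y x) &
      (forall x y z, e x y -> e x z -> y != z -> a x y != a x z)].

Definition class1 : Prop :=
  (exists a, proper_col maxdeg a) /\
  (forall t a, proper_col t a -> maxdeg <= t).

Definition chordless : Prop :=
  forall s : seq T, uniq s -> 3 <= size s -> cycle e s ->
  forall x y, x \in s -> y \in s -> e x y -> next s x = y \/ next s y = x.

Definition kedge (a : T -> T -> nat) (c d : nat) : rel T :=
  fun x y => e x y && ((a x y == c) || (a x y == d)).

Definition kchange (a : T -> T -> nat) (c d : nat) (w : T) : T -> T -> nat :=
  fun x y =>
    if connect (kedge a c d) w x && ((a x y == c) || (a x y == d))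
    then (if a x y == c then d else c) else a x y.

Definition kstep (t : nat) (a b : T -> T -> nat) : Prop :=
  exists c d w, [/\ 1 <= c <= t, 1 <= d <= t, c != d &
    forall x y, e x y -> b x y = kchange a c d w x y].

Inductive kequiv (t : nat) (a : T -> T -> nat) : (T -> T -> nat) -> Prop :=
| kequiv_refl b : (forall x y, e x y -> a x y = b x y) -> kequiv t a b
| kequiv_step b c : kequiv t a b -> kstep t b c -> kequiv t a c.

Definition edge_set (P : T -> T -> bool) : {set {set T}} :=
  [set [set p.1; p.2] | p in [set p : T * T | e p.1 p.2 && P p.1 p.2]].

Definition bad (g a : T -> T -> nat) : T -> T -> bool :=
  fun x y => (g x y == 1) && (a x y != 1).
Definition ugly (g a : T -> T -> nat) : T -> T -> bool :=
  fun x y => (g x y != 1) && (a x y == 1).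

Definition nbad g a := #|edge_set (bad g a)|.
Definition nugly g a := #|edge_set (ugly g a)|.

Definition inC (b a : T -> T -> nat) : Prop :=
  proper_col maxdeg.+1 a /\ kequiv maxdeg.+1 b a.

Definition minimal (g b a : T -> T -> nat) : Prop :=
  inC b a /\
  forall a', inC b a' ->
    nbad g a <= nbad g a' /\ (nbad g a' = nbad g a -> nugly g a <= nugly g a').

Definition missing (a : T -> T -> nat) (x : T) (c : nat) : Prop :=
  forall y, e x y -> a x y != c.

Definition good_missing (t : nat) (a : T -> T -> nat) (m : T -> nat) : Prop :=
  forall x, [/\ 1 <= m x <= t, missing a x (m x) &
    (m x = 1 <-> (missing a x 1 /\
                  forall c, 1 <= c <= t -> missing a x c -> c = 1))].

(* xs = [x_0; ...; x_p] with x_0 = v describes the a-fan (u x_0, ..., u x_p) *)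
Definition is_fan (a : T -> T -> nat) (m : T -> nat) (u v : T) (xs : seq T)
  : Prop :=
  let p := (size xs).-1 in
  [/\ 0 < size xs, head v xs = v, uniq xs & all (e u) xs] /\
  [/\ (forall i, i < p -> m (nth v xs i) = a u (nth v xs i.+1)) &
      (missing a u (m (last v xs)) \/
       m (last v xs) \in map (a u) (take p xs))].

End Defs.

From mathcomp Require Import all_boot zify.

Set Implicit Arguments. Unset Strict Implicit. Unset Printing Implicit Defensive.

(* Suppose v is adjacent to x := x_p, so that uvx is a triangle (ux is a fan
   edge; nothing else about the fan is needed).  Put mu = m(u), dl = m(v).
   Both differ from 1 because uv has colour 1, and mu <> dl: otherwise the
   (1,mu)-chain at u is the single edge uv, and swapping it removes an ugly
   edge without creating a bad one.  By minimality u and v also lie in one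
   (mu,dl)-chain (else a swap at v makes mu missing at both ends), and in a
   chordless graph that chain must run v - x - u, so a(vx) = mu and
   a(ux) = dl.  Since gamma needs three colours on the triangle, Delta >= 3
   and there is a colour k outside {1, mu, dl}.  Swapping k and mu at u keeps
   the colouring minimal with k missing at u and dl at v, so now vx must be
   coloured k or dl.  But the (k,mu)-chain of u cannot reach v (it would have
   to pass through ux, coloured dl), so vx keeps the colour mu: a
   contradiction. *)

Lemma next_last_uniq (T : eqType) (x : T) p :
  uniq (x :: p) -> next (x :: p) (last x p) = x.
Proof. by move=> up; rewrite next_nth mem_last index_last // nth_default. Qed.

Section ChordlessGraph.
Variables (T : finType) (e : rel T).
Hypotheses (e_sym : symmetric e) (e_irr : irreflexive e) (e_chordless : chordless e).

(* A shortest r-path from A to B closes with BA into a chordless cycle; the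
   edges CA and CB can only be cycle edges if the path is A, C, B. *)
Lemma chordless_triangle_connect (r : rel T) A B C :
  subrel r e -> e A B -> e B C -> e C A -> ~~ r A B -> connect r A B ->
  r A C && r C B.
Proof.
move=> sub_r eAB eBC eCA nrAB /connectP [p rp lastB].
case/shortenP: rp lastB => {}p rp up _ lastB.
have neq_e x y : e x y -> x != y by apply: contraTneq => ->; rewrite e_irr.
have CA := neq_e _ _ eCA; have BC := neq_e _ _ eBC.
case: p rp up lastB => [|y [|z q]] rp up lastB.
- by move: (neq_e _ _ eAB); rewrite lastB eqxx.
- by rewrite lastB /= andbT in nrAB rp; rewrite rp in nrAB.
set s := A :: y :: z :: q.
have yB : y != B.
  apply: contraTneq up => ->; rewrite lastB /= mem_last.
  by rewrite andbF.
have ep : path e A (y :: z :: q) := sub_path sub_r rp.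
have Bs : B \in s by rewrite lastB mem_last.
have nextB : next s B = A by rewrite lastB next_last_uniq.
case Cs : (C \in s).
- have cyc : cycle e s by rewrite /s /cycle rcons_path ep -lastB e_sym eAB.
  have eAC : e A C by rewrite e_sym.
  have [yC | nextC] := e_chordless up isT cyc (mem_head _ _) Cs eAC; last first.
    have := congr1 (prev s) (etrans nextC (esym nextB)); rewrite !(prev_next up) => CB.
    by rewrite CB eqxx in BC.
  move: yC; rewrite /next /= eqxx => yC; subst y.
  have eCB : e C B by rewrite e_sym.
  have [zB | nextBC] := e_chordless up isT cyc Cs Bs eCB; last first.
    by move: CA; rewrite -nextBC nextB eqxx.
  move: zB rp; rewrite /next /= (negbTE CA) eqxx => ->.
  by case/and3P => -> ->.
- have us : uniq (C :: s) by rewrite cons_uniq Cs.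
  have cyc : cycle e (C :: s).
    have eBC' : e (last A (y :: z :: q)) C by rewrite -lastB.
    by rewrite /s /cycle rcons_path -cat1s cat_path ep /= eCA; exact: eBC'.
  have As' : A \in C :: s by rewrite !inE eqxx orbT.
  have Bs' : B \in C :: s by rewrite inE Bs orbT.
  have [yB' | nextBA] := e_chordless us isT cyc As' Bs' eAB.
    by move: yB; rewrite -yB' /next /= [A == C]eq_sym (negbTE CA) eqxx eqxx.
  by move: CA; rewrite -nextBA [B]lastB (next_last_uniq us) eqxx.
Qed.
End ChordlessGraph.

Section KempeChange.
Variables (T : finType) (e : rel T) (t : nat) (a : T -> T -> nat) (c d : nat).
Hypotheses (e_sym : symmetric e) (e_irr : irreflexive e) (a_proper : proper_col e t a).

Lemma proper_col_inj x y z : e x y -> e x z -> a x y = a x z -> y = z.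
Proof.
case: a_proper => _ _ a_diff exy exz axyz.
apply/eqP/negPn/negP => /(a_diff x y z exy exz); by rewrite axyz eqxx.
Qed.

Lemma kedge_sym : symmetric (kedge e a c d).
Proof.
case: a_proper => _ a_sym _ x y; rewrite /kedge e_sym.
by case exy : (e y x) => //=; rewrite a_sym // e_sym.
Qed.

Lemma kchange_proper w :
  1 <= c <= t -> 1 <= d <= t -> proper_col e t (kchange e a c d w).
Proof.
case: a_proper => a_range a_sym a_diff c_range d_range; split.
- move=> x y exy; rewrite /kchange; case: ifP => _; last exact: a_range.
  by case: ifP.
- move=> x y exy; rewrite /kchange -(a_sym x y exy).
  case cdxy : ((a x y == c) || (a x y == d)); rewrite ?andbF // !andbT.
  have kxy : kedge e a c d x y by rewrite /kedge exy cdxy.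
  by rewrite (same_connect1r (sym_connect_sym kedge_sym) kxy).
- move=> x y z exy exz yz; have := a_diff x y z exy exz yz.
  rewrite /kchange; case: (connect _ w x) => //=.
  by case: (a x y =P c); case: (a x y =P d); case: (a x z =P c); case: (a x z =P d);
    rewrite /=; lia.
Qed.

Lemma kchange_out w x y :
  ~~ connect (kedge e a c d) w x -> kchange e a c d w x y = a x y.
Proof. by rewrite /kchange => /negbTE ->. Qed.

Lemma kchange_eq1 w x y : c != 1 -> d != 1 ->
  (kchange e a c d w x y == 1) = (a x y == 1).
Proof.
rewrite /kchange; case: (connect _ w x) => //=.
by case: (a x y =P c); case: (a x y =P d) => /=; lia.
Qed.

Lemma kchange_missing_root w :
  c != d -> missing e a w d -> missing e (kchange e a c d w) w c.
Proof.
move=> cd miss_d z ewz; rewrite /kchange connect0 /=; have := miss_d z ewz.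
by case: (a w z =P c); case: (a w z =P d) => /=; lia.
Qed.

Lemma kchange_missing_other w x f : f != c -> f != d ->
  missing e a x f -> missing e (kchange e a c d w) x f.
Proof.
move=> fc fd miss_f z exz; rewrite /kchange; have := miss_f z exz.
by case: (connect _ w x); case: (a x z =P c); case: (a x z =P d) => /=; lia.
Qed.

Lemma kchange_single_edge u v : e u v -> a u v = c ->
  missing e a u d -> missing e a v d -> forall x y, e x y ->
  kchange e a c d u x y = if (a x y == c) && (x \in [set u; v]) then d else a x y.
Proof.
move=> euv auv miss_u miss_v.
case: (a_proper) => _ a_sym _.
have partner x y : x \in [set u; v] -> e x y -> a x y = c -> y \in [set u; v].
  case/set2P => -> exy axy; rewrite !inE; apply/orP.
    by right; apply/eqP/(proper_col_inj exy euv); rewrite axy.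
  have evu : e v u by rewrite e_sym.
  by left; apply/eqP/(proper_col_inj exy evu); rewrite axy -a_sym.
have miss_S x y : x \in [set u; v] -> e x y -> a x y != d.
  by case/set2P => ->; [exact: miss_u | exact: miss_v].
have kS_closed : closed (kedge e a c d) [set u; v].
  apply: (intro_closed (sym_connect_sym kedge_sym)) => x y /andP [exy cdxy] xS.
  case/orP: cdxy => /eqP axy; first exact: partner xS exy axy.
  by have := miss_S x y xS exy; rewrite axy eqxx.
have comp x : connect (kedge e a c d) u x = (x \in [set u; v]).
  apply/idP/idP => [cux | /set2P [-> | ->]]; last 2 first.
  - exact: connect0.
  - by apply: connect1; rewrite /kedge euv auv eqxx.
  by rewrite -(closed_connect kS_closed cux) set21.
move=> x y exy; rewrite /kchange comp.
case xS : (x \in [set u; v]); rewrite ?andbF ?andbT //.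
by rewrite (negbTE (miss_S x y xS exy)) orbF; case: (a x y == c).
Qed.

Lemma proper_col_triangle_ge3 u v x : e u v -> e v x -> e x u -> 3 <= t.
Proof.
case: a_proper => a_range a_sym a_diff euv evx exu.
have neq_e y z : e y z -> y != z by apply: contraTneq => ->; rewrite e_irr.
have evu : e v u by rewrite e_sym.
have exv : e x v by rewrite e_sym.
have eux : e u x by rewrite e_sym.
have := a_diff u v x euv eux (neq_e _ _ evx).
have := a_diff v u x evu evx (neq_e _ _ eux).
have := a_diff x u v exu exv (neq_e _ _ euv).
rewrite -(a_sym u v euv) (a_sym x u exu) (a_sym x v exv).
have := a_range u v euv; have := a_range u x eux; have := a_range v x evx.
lia.
Qed.

Lemma good_missing_neq1 m x y :
  good_missing e t a m -> e x y -> a x y = 1 -> m x != 1.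
Proof.
move=> a_m exy axy; case: (a_m x) => _ _ [to1 _]; apply/eqP => /to1 [miss1 _].
by have := miss1 y exy; rewrite axy eqxx.
Qed.
End KempeChange.

Lemma fresh_colour (mu dl D : nat) : 3 <= D ->
  exists k, [/\ 1 <= k <= D.+1, k != 1, k != mu & k != dl].
Proof.
move=> D3; case: (eqVneq mu 2) => [mu2 | mu2]; case: (eqVneq dl 2) => [dl2 | dl2].
- by exists 3; split; lia.
- by case: (eqVneq dl 3) => dl3; [exists 4 | exists 3]; split; lia.
- by case: (eqVneq mu 3) => mu3; [exists 4 | exists 3]; split; lia.
- by exists 2; split; lia.
Qed.

Section Minimal.
Variables (T : finType) (e : rel T) (g b : T -> T -> nat).
Hypotheses (e_sym : symmetric e) (e_irr : irreflexive e) (e_chordless : chordless e).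

Lemma eq_edge_set (P Q : T -> T -> bool) :
  (forall x y, e x y -> P x y = Q x y) -> edge_set e P = edge_set e Q.
Proof.
move=> ePQ; rewrite /edge_set.
suff -> : [set p : T * T | e p.1 p.2 && P p.1 p.2] = [set p | e p.1 p.2 && Q p.1 p.2] by [].
by apply/setP => p; rewrite !inE; case ep : (e p.1 p.2) => //=; rewrite ePQ.
Qed.

Lemma edge_setS (P Q : T -> T -> bool) :
  (forall x y, e x y -> P x y -> Q x y) -> edge_set e P \subset edge_set e Q.
Proof.
move=> ePQ; apply: imsetS; apply/subsetP => p; rewrite !inE.
by case/andP => ep Pp; rewrite ep ePQ.
Qed.

Lemma minimal_kchange a c d w : minimal e g b a ->
  1 <= c <= (maxdeg e).+1 -> 1 <= d <= (maxdeg e).+1 -> c != d -> c != 1 -> d != 1 ->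
  minimal e g b (kchange e a c d w).
Proof.
move=> [[a_proper a_kequiv] a_min] c_range d_range cd c1 d1.
have nbadE : nbad e g (kchange e a c d w) = nbad e g a.
  by rewrite /nbad (eq_edge_set (Q := bad g a)) // => x y _; rewrite /bad kchange_eq1.
have nuglyE : nugly e g (kchange e a c d w) = nugly e g a.
  by rewrite /nugly (eq_edge_set (Q := ugly g a)) // => x y _; rewrite /ugly kchange_eq1.
rewrite /minimal nbadE nuglyE; split=> //; split; first exact: kchange_proper.
by apply: kequiv_step a_kequiv _; exists c, d, w.
Qed.

Lemma minimal_ugly_no_common_missing a t u v mu : minimal e g b a -> proper_col e t g ->
  e u v -> ugly g a u v -> 1 <= mu <= (maxdeg e).+1 -> mu != 1 ->
  missing e a u mu -> ~ missing e a v mu.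
Proof.
move=> a_minimal [_ g_sym _] euv /andP [guv /eqP auv] mu_range mu1 miss_u miss_v.
have [[a_proper a_kequiv] a_min] := a_minimal.
have evu : e v u by rewrite e_sym.
set a' := kchange e a 1 mu u.
have a'E : forall x y, e x y ->
    a' x y = if (a x y == 1) && (x \in [set u; v]) then mu else a x y.
  exact: (kchange_single_edge e_sym a_proper euv auv miss_u miss_v).
have uv_g x y : x \in [set u; v] -> e x y -> a x y = 1 -> g x y != 1.
  case/set2P => -> exy axy.
  - by rewrite (proper_col_inj a_proper exy euv) ?auv.
  - have avu : a v u = 1 by case: a_proper => _ a_sym _; rewrite -a_sym.
    by rewrite (proper_col_inj a_proper exy evu) ?avu // -g_sym.
have ugly'_out x y : e x y -> ugly g a' x y -> x \notin [set u; v].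
  move=> exy /andP [_]; rewrite a'E //; apply: contraL => xS.
  by rewrite xS andbT; case: ifP => [_ | /negbT].
have nbadE : nbad e g a' = nbad e g a.
  rewrite /nbad (eq_edge_set (Q := bad g a)) // => x y exy; rewrite /bad a'E //.
  case: ifP => // /andP [/eqP axy xS].
  by rewrite axy (negbTE (uv_g x y xS exy axy)).
have nugly_lt : nugly e g a' < nugly e g a.
  apply: proper_card; apply/properP; split.
    apply: edge_setS => x y exy ugly'xy.
    have /negbTE xS := ugly'_out x y exy ugly'xy.
    by move: ugly'xy; rewrite /ugly a'E // xS andbF.
  exists [set u; v].
    by apply/imsetP; exists (u, v); rewrite // inE /= euv /ugly guv auv eqxx.
  apply/imsetP => [[[x y]]]; rewrite inE /= => /andP [exy ugly'xy] uvE.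
  by have := ugly'_out x y exy ugly'xy; rewrite uvE set21.
have a'C : inC e b a'.
  split; first exact: kchange_proper.
  by apply: kequiv_step a_kequiv _; exists 1, mu, u; split; rewrite // eq_sym.
have [_ /(_ nbadE)] := a_min _ a'C.
by rewrite leqNgt nugly_lt.
Qed.

Lemma minimal_common_neighbour_kedge a t u v x mu dl :
  minimal e g b a -> proper_col e t g -> e u v -> ugly g a u v -> e u x -> e v x ->
  1 <= mu <= (maxdeg e).+1 -> 1 <= dl <= (maxdeg e).+1 -> mu != 1 -> dl != 1 -> mu != dl ->
  missing e a u mu -> missing e a v dl ->
  kedge e a mu dl v x && kedge e a mu dl x u.
Proof.
move=> a_minimal g_proper euv uv_ugly eux evx mu_range dl_range mu1 dl1 mu_dl miss_u miss_v.
have a_proper := a_minimal.1.1.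
have auv : a u v = 1 by case/andP: uv_ugly => _ /eqP.
have evu : e v u by rewrite e_sym.
have exv : e x v by rewrite e_sym.
have conn_vu : connect (kedge e a mu dl) v u.
  apply/negPn/negP => not_conn.
  have out y : kchange e a mu dl v u y = a u y by exact: kchange_out.
  have a'_minimal := minimal_kchange v a_minimal mu_range dl_range mu_dl mu1 dl1.
  apply: (minimal_ugly_no_common_missing a'_minimal g_proper euv _ mu_range mu1 _
           (kchange_missing_root mu_dl miss_v)).
  - by rewrite /ugly out.
  - by move=> y euy; rewrite out; exact: miss_u.
apply: (chordless_triangle_connect e_sym e_irr e_chordless _ evu eux exv) => //.
- by move=> p q /andP [].
- case: a_proper => _ a_sym _.
  by rewrite /kedge evu -a_sym // auv !(eq_sym 1) (negbTE mu1) (negbTE dl1).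
Qed.

Lemma minimal_ugly_no_triangle a u v x mu dl :
  minimal e g b a -> proper_col e (maxdeg e) g -> e u v -> ugly g a u v -> e u x -> e v x ->
  1 <= mu <= (maxdeg e).+1 -> 1 <= dl <= (maxdeg e).+1 -> mu != 1 -> dl != 1 -> mu != dl ->
  missing e a u mu -> missing e a v dl -> False.
Proof.
move=> a_minimal g_proper euv uv_ugly eux evx mu_range dl_range mu1 dl1 mu_dl miss_u miss_v.
have [_ a_sym _] := a_minimal.1.1.
have exu : e x u by rewrite e_sym.
have auv : a u v = 1 by case/andP: uv_ugly => _ /eqP.
have [/andP [_ vx_col] /andP [_ xu_col]] := andP (minimal_common_neighbour_kedge a_minimal
  g_proper euv uv_ugly eux evx mu_range dl_range mu1 dl1 mu_dl miss_u miss_v).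
have avx : a v x = mu.
  by case/orP: vx_col => /eqP // vx_dl; have := miss_v x evx; rewrite vx_dl eqxx.
have aux : a u x = dl.
  rewrite a_sym //; case/orP: xu_col => /eqP // xu_mu.
  by have := miss_u x eux; rewrite a_sym // xu_mu eqxx.
have D3 := proper_col_triangle_ge3 e_sym e_irr g_proper euv evx exu.
have [k [k_range k1 k_mu k_dl]] := fresh_colour mu dl D3.
set a' := kchange e a k mu u.
have a'_minimal : minimal e g b a' :=
  minimal_kchange u a_minimal k_range mu_range k_mu k1 mu1.
have uv_ugly' : ugly g a' u v by rewrite /ugly kchange_eq1.
have miss_u' : missing e a' u k := kchange_missing_root k_mu miss_u.
have miss_v' : missing e a' v dl.
  by apply: kchange_missing_other miss_v; rewrite eq_sym.
have /andP [/andP [_ vx_col'] _] := minimal_common_neighbour_kedge a'_minimal g_proper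
  euv uv_ugly' eux evx k_range dl_range k1 dl1 k_dl miss_u' miss_v'.
have not_conn : ~~ connect (kedge e a k mu) u v.
  apply/negP => conn.
  have sub : subrel (kedge e a k mu) e by move=> p q /andP [].
  have := chordless_triangle_connect e_sym e_irr e_chordless sub euv evx exu _ conn.
  rewrite /kedge eux aux auv euv /= !(eq_sym 1) (negbTE k1) (negbTE mu1) /=.
  by rewrite (eq_sym dl k) (negbTE k_dl) (eq_sym dl mu) (negbTE mu_dl) => /(_ isT).
move: vx_col'; rewrite /a' kchange_out // avx.
by rewrite (eq_sym mu k) (negbTE k_mu) (negbTE mu_dl).
Qed.

End Minimal.

Theorem mainTheorem6 (T : finType) (e : rel T)
  (e_sym : symmetric e) (e_irr : irreflexive e)
  (hchordless : chordless e) (hclass1 : class1 e)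
  (g b : T -> T -> nat)
  (hg : proper_col e (maxdeg e) g) (hb : proper_col e (maxdeg e).+1 b)
  (a : T -> T -> nat) (m : T -> nat)
  (hmin : minimal e g b a) (hm : good_missing e (maxdeg e).+1 a m)
  (u v : T) (huv : e u v) (hugly : ugly g a u v)
  (xs : seq T) (hfan : is_fan e a m u v xs) (hp : 2 <= size xs) :
  ~~ e v (last v xs).
Proof.
have [[_ _ _ xs_adj] _] := hfan.
have eux : e u (last v xs).
  by have := mem_last v xs; rewrite inE => /predU1P [-> | /(allP xs_adj)].
apply/negP => evx.
have [a_proper _] := hmin.1.
have auv : a u v = 1 by case/andP: hugly => _ /eqP.
have avu : a v u = 1 by case: a_proper => _ a_sym _; rewrite -a_sym.
have evu : e v u by rewrite e_sym.
have [mu_range miss_u _] := hm u.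
have [dl_range miss_v _] := hm v.
have mu1 := good_missing_neq1 hm huv auv.
have dl1 := good_missing_neq1 hm evu avu.
have mu_dl : m u != m v.
  apply/eqP => mu_dl.
  apply: (minimal_ugly_no_common_missing e_sym hmin hg huv hugly mu_range mu1 miss_u).
  by rewrite mu_dl.
exact: (minimal_ugly_no_triangle e_sym e_irr hchordless hmin hg huv hugly eux evx
  mu_range dl_range mu1 dl1 mu_dl miss_u miss_v).
Qed.
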